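(* For every integer $n\ge 1$, there is no tiling of the $3\times 3\times n$ box by bricks of size $1\times 2\times 2$.
   Context: A tiling of a $k\times m\times n$ box (made of $kmn$ unit cubes) by $a\times b\times c$ bricks is a partition of the box into non-overlapping axis-parallel boxes with integer corner coordinates, each congruent (by an axis-permuting placement) to the $a\times b\times c$ brick; all orientations are allowed. *)

From mathcomp Require Import all_boot.
From Stdlib Require List.
Set Implicit Arguments. Unset Strict Implicit. Unset Printing Implicit Defensive.

(* Unit cells are indexed by their minimal corner (i,j,l) in nat^3; the box
   k x m x n is the set of cells with i < k, j < m, l < n. *)
Definition cell := (nat * nat * nat)%type.

(* A placed brick: minimal corner (x,y,z) and side lengths (a,b,c) along the
   three axes; it occupies the cells [x,x+a) x [y,y+b) x [z,z+c). *)
Record placed := Placed { px : nat; py : nat; pz : nat; la : nat; lb : nat; lc : nat }.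

Definition in_brick (B : placed) (p : cell) : bool :=
  let: (i, j, l) := p in
  [&& px B <= i < px B + la B, py B <= j < py B + lb B & pz B <= l < pz B + lc B].

Definition in_box (k m n : nat) (p : cell) : bool :=
  let: (i, j, l) := p in [&& i < k, j < m & l < n].

Definition is_orientation (a b c : nat) (B : placed) : Prop :=
  perm_eq [:: la B; lb B; lc B] [:: a; b; c].

Definition tiling (k m n a b c : nat) (T : seq placed) : Prop :=
  (forall B, List.In B T -> is_orientation a b c B /\
       (forall p : cell, in_brick B p -> in_box k m n p)) /\
  (forall p : cell, in_box k m n p -> count (fun B => in_brick B p) T = 1).

Definition tileable (k m n a b c : nat) : Prop := exists T, tiling k m n a b c T.

(* Colour the cell (i, j, l) by the parity of i + j.  The cross-section of a
   1 x 2 x 2 brick parallel to the 3 x 3 face is a 1 x 2, 2 x 1 or 2 x 2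
   rectangle, which always has an even side and therefore covers as many
   cells of each colour; so any tiling covers equally many cells of both
   colours.  But the 3 x 3 x n box has 5n cells of even colour and only 4n of
   odd colour. *)
From mathcomp Require Import all_boot zify.
From Stdlib Require List.

Set Implicit Arguments.
Unset Strict Implicit.
Unset Printing Implicit Defensive.

Definition colour_weight (k m n : nat) (p : bool) (f : cell -> nat) : nat :=
  \sum_(i < k) \sum_(j < m) \sum_(l < n) (odd (i + j) == p) * f (i : nat, j : nat, l : nat).

Definition rect_colour_weight (k m : nat) (p : bool) (x y a b : nat) : nat :=
  \sum_(i < k) \sum_(j < m) (odd (i + j) == p) * ((x <= i < x + a) && (y <= j < y + b)).

Lemma colour_weightD k m n p f g :
  colour_weight k m n p (fun q => f q + g q)
  = colour_weight k m n p f + colour_weight k m n p g.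
Proof.
rewrite /colour_weight -big_split; apply: eq_bigr => i _.
rewrite -big_split; apply: eq_bigr => j _.
by rewrite -big_split; apply: eq_bigr => l _; rewrite mulnDr.
Qed.

Lemma colour_weight0 k m n p : colour_weight k m n p (fun=> 0) = 0.
Proof.
rewrite /colour_weight big1 // => i _; rewrite big1 // => j _.
by rewrite big1 // => l _; rewrite muln0.
Qed.

Lemma colour_weight_count_balanced k m n (T : seq placed) :
  (forall B, List.In B T ->
     colour_weight k m n false (in_brick B) = colour_weight k m n true (in_brick B)) ->
  colour_weight k m n false (fun q => count (in_brick^~ q) T)
  = colour_weight k m n true (fun q => count (in_brick^~ q) T).
Proof.
elim: T => [|B T IH] balanced; first by rewrite !colour_weight0.
rewrite /= !colour_weightD balanced /=; last by left.
by rewrite IH // => B' inT; apply: balanced; right.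
Qed.

Lemma colour_weight_cover k m n p f :
  (forall q, in_box k m n q -> f q = 1) ->
  colour_weight k m n p f = n * \sum_(i < k) \sum_(j < m) (odd (i + j) == p).
Proof.
move=> f1; rewrite /colour_weight big_distrr; apply: eq_bigr => i _.
rewrite big_distrr; apply: eq_bigr => j _.
rewrite (eq_bigr (fun=> (odd (i + j) == p) : nat)); last first.
  by move=> l _; rewrite f1 ?muln1 //= !ltn_ord.
by rewrite sum_nat_const card_ord.
Qed.

Lemma colour_weight_brick k m n p B :
  colour_weight k m n p (in_brick B)
  = rect_colour_weight k m p (px B) (py B) (la B) (lb B)
    * \sum_(l < n) (pz B <= l < pz B + lc B).
Proof.
rewrite /colour_weight /rect_colour_weight big_distrl; apply: eq_bigr => i _.
rewrite big_distrl; apply: eq_bigr => j _.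
rewrite big_distrr; apply: eq_bigr => l _ /=.
by case: (_ <= i < _); case: (_ <= j < _); case: (_ <= l < _);
  rewrite ?muln0 ?muln1.
Qed.

(* Each pair i, i.+1 contributes f p i + f (~~ p) i, which is symmetric in p. *)
Lemma sum_nat_parity_swap (f : bool -> nat -> nat) x t :
  (forall p i, f p i.+1 = f (~~ p) i) ->
  \sum_(x <= i < x + t.*2) f true i = \sum_(x <= i < x + t.*2) f false i.
Proof.
move=> fS; elim: t => [|t IH]; first by rewrite addn0 !big_geq.
rewrite doubleS addnS addnS !big_nat_recr ?leq_addr ?leqW ?leq_addr //=.
by rewrite IH !fS -!addnA [f false _ + _]addnC.
Qed.

Lemma rect_colour_weightE k m p x y a b : x + a <= k ->
  rect_colour_weight k m p x y a b
  = \sum_(x <= i < x + a) \sum_(j < m) (odd (i + j) == p) * (y <= j < y + b).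
Proof.
move=> le_xa_k; rewrite (big_nat_widen x (x + a) k) // big_geq_mkord.
rewrite big_mkcond; apply: eq_bigr => i _; rewrite /= [(i < _) && _]andbC.
case: (x <= i < x + a); first by [].
by rewrite big1 // => j _; rewrite muln0.
Qed.

Lemma rect_colour_weight_even_width k m x y a b :
  ~~ odd a -> x + a <= k ->
  rect_colour_weight k m false x y a b = rect_colour_weight k m true x y a b.
Proof.
move=> even_a le_xa_k; rewrite !rect_colour_weightE //.
rewrite -[a](odd_double_half a) (negbTE even_a) add0n.
symmetry; apply: (@sum_nat_parity_swap
  (fun p i => \sum_(j < m) (odd (i + j) == p) * (y <= j < y + b))) => q i.
by apply: eq_bigr => j _; rewrite addSn /= -eqb_negLR.
Qed.

Lemma rect_colour_weight_transpose k m p x y a b :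
  rect_colour_weight k m p x y a b = rect_colour_weight m k p y x b a.
Proof.
rewrite /rect_colour_weight exchange_big; apply: eq_bigr => j _.
by apply: eq_bigr => i _; rewrite addnC andbC.
Qed.

Lemma brick_colour_balanced k m n B :
  ~~ odd (la B) || ~~ odd (lb B) ->
  px B + la B <= k -> py B + lb B <= m ->
  colour_weight k m n false (in_brick B) = colour_weight k m n true (in_brick B).
Proof.
move=> /orP[even_a | even_b] le_x le_y; rewrite !colour_weight_brick.
  by rewrite rect_colour_weight_even_width.
by rewrite !(rect_colour_weight_transpose k m) rect_colour_weight_even_width.
Qed.

Lemma orientation_122 B : is_orientation 1 2 2 B ->
  [/\ 0 < la B, 0 < lb B, 0 < lc B & ~~ odd (la B) || ~~ odd (lb B)].
Proof.
case: B => x y z a b c; rewrite /is_orientation /= => perm_abc.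
have side v : v \in [:: a; b; c] -> (v == 1) || (v == 2).
  by rewrite (perm_mem perm_abc) !inE => /or3P[] ->; rewrite ?orbT.
have [/side a12 /side b12 /side c12] : [/\ a \in [:: a; b; c], b \in [:: a; b; c]
  & c \in [:: a; b; c]] by rewrite !inE !eqxx !orbT.
have ones := permP perm_abc (pred1 1).
by case/orP: a12 => /eqP a_eq; case/orP: b12 => /eqP b_eq;
  case/orP: c12 => /eqP c_eq; rewrite a_eq b_eq c_eq in ones *.
Qed.

Lemma brick_in_box_bounds k m n B :
  0 < la B -> 0 < lb B -> 0 < lc B ->
  (forall q, in_brick B q -> in_box k m n q) ->
  px B + la B <= k /\ py B + lb B <= m.
Proof.
case: B => x y z a b c /= a0 b0 c0 inside.
have /and3P[] : in_box k m n (x + a.-1, y + b.-1, z).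
  by apply: inside; apply/and3P; split => /=; lia.
lia.
Qed.

Theorem mainTheorem16 (n : nat) : 1 <= n -> ~ tileable 3 3 n 1 2 2.
Proof.
move=> n_gt0 [T [bricks cover]].
have: colour_weight 3 3 n false (fun q => count (in_brick^~ q) T)
    = colour_weight 3 3 n true (fun q => count (in_brick^~ q) T).
  apply: colour_weight_count_balanced => B.
  move=> /bricks[/orientation_122[a_gt0 b_gt0 c_gt0 even_side] inside].
  have [x_fits y_fits] := brick_in_box_bounds a_gt0 b_gt0 c_gt0 inside.
  exact: brick_colour_balanced.
rewrite !(colour_weight_cover _ cover) !big_ord_recl !big_ord0 /=.
lia.
Qed.
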